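(* For every $n\in\mathbb N$, the exponential vector space $\mathscr D^n[0,\infty)$ has a basis and $\dim\mathscr D^n[0,\infty)=[1:0]$.
   Context: An exponential vector space (evs) over a field $K$ is a partially ordered set $(X,\leq)$ with a binary operation $+$ on $X$ and a map $K\times X\to X$, $(\alpha,x)\mapsto \alpha x$, such that: (A1) $(X,+)$ is a commutative semigroup with identity $\theta$; (A2) $x\leq y$ implies $x+z\leq y+z$ and $\alpha x\leq \alpha y$ for all $z\in X$, $\alpha\in K$; (A3) $\alpha(x+y)=\alpha x+\alpha y$, $\alpha(\beta x)=(\alpha\beta)x$, $(\alpha+\beta)x\leq \alpha x+\beta x$, $1x=x$; (A4) $\alpha x=\theta$ iff $\alpha=0$ or $x=\theta$; (A5) $x+(-1)x=\theta$ iff $x\in X_0$, where $X_0:=\{z\in X: y\not\leq z \text{ for all } y\in X\smallsetminus\{z\}\}$ (the set of minimal elements, a vector space over $K$); (A6) for each $x\in X$ there is $p\in X_0$ with $p\leq x$. $\mathscr D^n[0,\infty)$ is the set $[0,\infty)^n$ over the field $\mathbb C$ with componentwise addition, scalar multiplication $\alpha\cdot(x_1,\dots,x_n)=(|\alpha|x_1,\dots,|\alpha|x_n)$, and the lexicographic (dictionary) order: $x\leq y$ iff $x=y$ or $x_i<y_i$ at the first index $i$ where $x_i\neq y_i$; its primitive space is $\{(0,\dots,0)\}$. For $x\in X\smallsetminus X_0$ let $L(x):=\{z\in X: z\geq \alpha x+p \text{ for some } \alpha\in K\smallsetminus\{0\},\ p\in X_0\}$. A subset $B\subseteq X\smallsetminus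 X_0$ generates $X\smallsetminus X_0$ if $X\smallsetminus X_0=\bigcup_{b\in B}L(b)$. Elements $x,y\in X\smallsetminus X_0$ are orderly dependent if $x\in L(y)$ or $y\in L(x)$, and orderly independent otherwise; $B$ is orderly independent if any two distinct members are orderly independent. A basis of $X\smallsetminus X_0$ is an orderly independent generating subset. All bases have the same cardinality $\dim(X\smallsetminus X_0)$; $\dim X_0$ is the vector-space dimension of $X_0$ ($0$ if $X_0=\{\theta\}$), and $\dim X:=[\dim(X\smallsetminus X_0):\dim X_0]$. *)

From Stdlib Require Import Reals Lra.
From Coquelicot Require Import Coquelicot.
Open Scope R_scope.

(** The data of an exponential vector space over the field C needed to state
    the notions of basis and dimension. *)
Record EVS := {
  car   : Type;
  le    : car -> car -> Prop;
  add   : car -> car -> car;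
  scal  : C -> car -> car;
  theta : car
}.

Section Notions.
Variable X : EVS.

Definition X0 (z : car X) : Prop :=
  forall y : car X, y <> z -> ~ le X y z.

Definition Lset (x : car X) (z : car X) : Prop :=
  exists (a : C) (p : car X), a <> 0%C /\ X0 p /\ le X (add X (scal X a x) p) z.

Definition generates (B : car X -> Prop) : Prop :=
  (forall b, B b -> ~ X0 b) /\
  (forall z, ~ X0 z <-> exists b, B b /\ Lset b z).

Definition orderly_dependent (x y : car X) : Prop := Lset y x \/ Lset x y.

Definition orderly_independent_set (B : car X -> Prop) : Prop :=
  forall x y, B x -> B y -> x <> y -> ~ orderly_dependent x y.

Definition is_basis (B : car X -> Prop) : Prop :=
  (forall b, B b -> ~ X0 b) /\ orderly_independent_set B /\ generates B.
End Notions.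

Definition Dvec (n : nat) : Type :=
  { x : nat -> R | (forall i, 0 <= x i) /\ (forall i, (n <= i)%nat -> x i = 0) }.

Lemma Dzero_prop (n : nat) :
  (forall i : nat, 0 <= (fun _ : nat => 0) i) /\
  (forall i, (n <= i)%nat -> (fun _ : nat => 0) i = 0).
Proof. split; intros; lra. Qed.

Definition Dzero (n : nat) : Dvec n := exist _ (fun _ => 0) (Dzero_prop n).

Lemma Dadd_prop (n : nat) (x y : Dvec n) :
  (forall i, 0 <= proj1_sig x i + proj1_sig y i) /\
  (forall i, (n <= i)%nat -> proj1_sig x i + proj1_sig y i = 0).
Proof.
  destruct x as [x [Hx1 Hx2]], y as [y [Hy1 Hy2]]; simpl; split; intros i.
  - specialize (Hx1 i); specialize (Hy1 i); lra.
  - intros Hi; rewrite (Hx2 i Hi), (Hy2 i Hi); lra.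
Qed.

Definition Dadd (n : nat) (x y : Dvec n) : Dvec n :=
  exist _ (fun i => proj1_sig x i + proj1_sig y i) (Dadd_prop n x y).

Lemma Dscal_prop (n : nat) (a : C) (x : Dvec n) :
  (forall i, 0 <= Cmod a * proj1_sig x i) /\
  (forall i, (n <= i)%nat -> Cmod a * proj1_sig x i = 0).
Proof.
  destruct x as [x [Hx1 Hx2]]; simpl; split; intros i.
  - apply Rmult_le_pos; [apply Cmod_ge_0 | apply Hx1].
  - intros Hi; rewrite (Hx2 i Hi); ring.
Qed.

Definition Dscal (n : nat) (a : C) (x : Dvec n) : Dvec n :=
  exist _ (fun i => Cmod a * proj1_sig x i) (Dscal_prop n a x).

Definition Dle (n : nat) (x y : Dvec n) : Prop :=
  x = y \/
  exists i, (i < n)%nat /\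
    (forall j, (j < i)%nat -> proj1_sig x j = proj1_sig y j) /\
    proj1_sig x i < proj1_sig y i.

Definition Dn (n : nat) : EVS :=
  {| car := Dvec n; le := @Dle n; add := @Dadd n; scal := @Dscal n; theta := Dzero n |}.

From Stdlib Require Import Reals.
From Coquelicot Require Import Coquelicot.
From Stdlib Require Import Lra Lia Classical FunctionalExtensionality ProofIrrelevance.
From Stdlib Require Import Wf_nat.
Open Scope R_scope.

(** The minimal elements of D^n[0,oo) are just the zero vector, and for a nonzero
    vector y the set L(y) consists of the nonzero z whose first nonzero coordinate
    comes no later than that of y: a small enough multiple of y is then
    lexicographically below z. Hence any two elements outside X_0 are orderly
    dependent, so a basis has exactly one element, and the last unit vector
    e_n, whose first nonzero coordinate is as late as possible, is one. *)

Section Singleton_basis.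
Variable X : EVS.

Lemma singleton_is_basis (b : car X) :
  ~ X0 X b ->
  (forall z, ~ X0 X z -> Lset X b z) ->
  (forall z, Lset X b z -> ~ X0 X z) ->
  is_basis X (fun x => x = b).
Proof.
  intros Hb HL HL'.
  split; [|split; [|split]].
  - intros x ->; exact Hb.
  - intros x y -> -> Hxy; contradiction.
  - intros x ->; exact Hb.
  - intros z; split.
    + intros Hz; exists b; auto.
    + intros [b' [-> Hz]]; auto.
Qed.

Lemma basis_singleton_of_dependent (B : car X -> Prop) (z : car X) :
  (forall x y, ~ X0 X x -> ~ X0 X y -> orderly_dependent X x y) ->
  ~ X0 X z -> is_basis X B ->
  exists b, forall x, B x <-> x = b.
Proof.
  intros Hdep Hz [HB [Hind [_ Hgen]]].
  destruct (proj1 (Hgen z) Hz) as [b [Hb _]].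
  exists b; intros x; split.
  - intros Hx; apply NNPP; intros Hxb.
    exact (Hind x b Hx Hb Hxb (Hdep x b (HB x Hx) (HB b Hb))).
  - intros ->; exact Hb.
Qed.

End Singleton_basis.


Lemma Dvec_eq (n : nat) (x y : Dvec n) :
  (forall i, proj1_sig x i = proj1_sig y i) -> x = y.
Proof.
  destruct x as [f Hf], y as [g Hg]; simpl; intros Hfg.
  assert (f = g) as <- by (apply functional_extensionality; exact Hfg).
  f_equal; apply proof_irrelevance.
Qed.

Definition leading_index (n : nat) (x : Dvec n) (i : nat) : Prop :=
  (forall j, (j < i)%nat -> proj1_sig x j = 0) /\ 0 < proj1_sig x i.

Lemma leading_index_lt (n : nat) (x : Dvec n) (i : nat) :
  leading_index n x i -> (i < n)%nat.
Proof.
  intros [_ Hi]; destruct (Nat.lt_ge_cases i n) as [h|h]; [exact h|].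
  rewrite (proj2 (proj2_sig x) i h) in Hi; lra.
Qed.

Lemma leading_index_exists (n : nat) (x : Dvec n) :
  x <> Dzero n -> exists i, leading_index n x i.
Proof.
  intros Hx.
  set (P := fun k => proj1_sig x k <> 0).
  assert (HP : exists k, P k).
  { apply NNPP; intros HP; apply Hx, Dvec_eq; intros k.
    apply NNPP; intros Hk; exact (HP (ex_intro _ k Hk)). }
  destruct (dec_inh_nat_subset_has_unique_least_element P (fun k => classic (P k)) HP)
    as [i [[Hi Hmin] _]].
  exists i; split.
  - intros j Hj; apply NNPP; intros Pj; specialize (Hmin j Pj); lia.
  - destruct (proj1 (proj2_sig x) i) as [Hpos|Hzero]; [exact Hpos|].
    exfalso; exact (Hi (eq_sym Hzero)).
Qed.

Lemma X0_Dn (n : nat) (z : Dvec n) : X0 (Dn n) z <-> z = Dzero n.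
Proof.
  split.
  - intros Hz; apply NNPP; intros Hz0.
    destruct (leading_index_exists n z Hz0) as [i Li].
    apply (Hz (Dzero n)); [congruence|].
    right; exists i; split; [exact (leading_index_lt n z i Li)|].
    split; [intros j Hj; symmetry; exact (proj1 Li j Hj) | exact (proj2 Li)].
  - intros -> y Hy [E|[i [_ [_ Hi]]]]; [exact (Hy E)|].
    pose proof (proj1 (proj2_sig y) i); simpl in Hi; lra.
Qed.

Lemma Lset_Dn_of_leading_index (n : nat) (x y : Dvec n) (i : nat) :
  leading_index n x i -> (forall k, (k < i)%nat -> proj1_sig y k = 0) ->
  Lset (Dn n) y x.
Proof.
  intros Li Hy.
  pose proof (proj1 (proj2_sig y) i) as Hyi.
  pose proof (proj2 Li) as Hxi.
  set (c := proj1_sig x i / (proj1_sig y i + 1)).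
  assert (Hc : 0 < c) by (apply Rdiv_lt_0_compat; lra).
  assert (Hcy : c * proj1_sig y i < proj1_sig x i).
  { unfold c; apply (Rmult_lt_reg_r (proj1_sig y i + 1)); [lra|].
    field_simplify; lra. }
  exists (RtoC c), (Dzero n); split; [|split].
  - intros E; apply (f_equal fst) in E; simpl in E; lra.
  - apply X0_Dn; reflexivity.
  - right; exists i; split; [exact (leading_index_lt n x i Li)|]; split; simpl.
    + intros j Hj; rewrite Hy, (proj1 Li j Hj) by exact Hj; ring.
    + rewrite Cmod_R, Rabs_pos_eq by lra; lra.
Qed.

Lemma Dn_orderly_dependent (n : nat) (x y : Dvec n) :
  x <> Dzero n -> y <> Dzero n -> orderly_dependent (Dn n) x y.
Proof.
  intros Hx Hy.
  destruct (leading_index_exists n x Hx) as [i Li].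
  destruct (leading_index_exists n y Hy) as [j Lj].
  destruct (Nat.le_gt_cases i j).
  - left; apply (Lset_Dn_of_leading_index n x y i Li).
    intros k Hk; apply (proj1 Lj); lia.
  - right; apply (Lset_Dn_of_leading_index n y x j Lj).
    intros k Hk; apply (proj1 Li); lia.
Qed.

Lemma Lset_Dn_neq0 (n : nat) (x z : Dvec n) :
  x <> Dzero n -> Lset (Dn n) x z -> z <> Dzero n.
Proof.
  intros Hx [a [p [Ha [Hp Hle]]]] ->.
  apply X0_Dn in Hp; subst p.
  apply Cmod_gt_0 in Ha.
  destruct Hle as [E|[i [_ [_ Hi]]]].
  - apply Hx, Dvec_eq; intros i.
    apply (f_equal (fun w => proj1_sig w i)) in E; simpl in E |- *; nra.
  - pose proof (proj1 (proj2_sig x) i); simpl in Hi; nra.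
Qed.

Definition last_unit_fun (n : nat) (k : nat) : R := if Nat.eqb (S k) n then 1 else 0.

Lemma last_unit_prop (n : nat) :
  (forall i, 0 <= last_unit_fun n i) /\
  (forall i, (n <= i)%nat -> last_unit_fun n i = 0).
Proof.
  unfold last_unit_fun; split; intros i.
  - destruct (Nat.eqb _ _); lra.
  - intros Hi; destruct (Nat.eqb_spec (S i) n); [lia | reflexivity].
Qed.

Definition last_unit (n : nat) : Dvec n := exist _ (last_unit_fun n) (last_unit_prop n).

Lemma last_unit_neq0 (n : nat) : (1 <= n)%nat -> last_unit n <> Dzero n.
Proof.
  intros Hn E; apply (f_equal (fun w => proj1_sig w (n - 1)%nat)) in E.
  simpl in E; unfold last_unit_fun in E.
  replace (S (n - 1)) with n in E by lia; rewrite Nat.eqb_refl in E; lra.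
Qed.

Lemma Lset_last_unit (n : nat) (z : Dvec n) :
  z <> Dzero n -> Lset (Dn n) (last_unit n) z.
Proof.
  intros Hz; destruct (leading_index_exists n z Hz) as [i Li].
  apply (Lset_Dn_of_leading_index n z _ i Li).
  pose proof (leading_index_lt n z i Li).
  intros k Hk; simpl; unfold last_unit_fun.
  destruct (Nat.eqb_spec (S k) n); [lia | reflexivity].
Qed.


Theorem mainTheorem13 (n : nat) (Hn : (1 <= n)%nat) :
  (exists B : car (Dn n) -> Prop, is_basis (Dn n) B) /\
  (forall B : car (Dn n) -> Prop, is_basis (Dn n) B ->
     exists b : car (Dn n), forall x, B x <-> x = b) /\
  (forall z : car (Dn n), X0 (Dn n) z <-> z = theta (Dn n)).
Proof.
  assert (HX : forall z : Dvec n, ~ X0 (Dn n) z <-> z <> Dzero n)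
    by (intros z; rewrite X0_Dn; tauto).
  assert (He : ~ X0 (Dn n) (last_unit n)) by exact (proj2 (HX _) (last_unit_neq0 n Hn)).
  split; [|split].
  - exists (fun x => x = last_unit n); apply singleton_is_basis; [exact He| |].
    + intros z Hz; apply Lset_last_unit, HX, Hz.
    + intros z Hz; apply HX, (Lset_Dn_neq0 n (last_unit n)), Hz.
      exact (last_unit_neq0 n Hn).
  - intros B HB; apply (basis_singleton_of_dependent (Dn n) B (last_unit n)); [|exact He|exact HB].
    intros x y Hx Hy; apply Dn_orderly_dependent; apply HX; assumption.
  - exact (X0_Dn n).
Qed.
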